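(* Let $n=2$, $E=\{p\in\Delta_2:p_1,p_2\in\mathbb Q\}$, and $\Theta=(\overline{\Delta}_2)^E$ with the topology of pointwise convergence. Let $\nu_0$ be the infinite product of the uniform distribution on $\overline{\Delta}_2$ (so the values $\pi(p)$, $p\in E$, are i.i.d. uniform). Let $\delta>0$ be rational and define $\mu(0)=(\frac12,\frac12)$, $\mu(t+1)=\left(\frac{\mu_1(t)}{1+\delta\mu_2(t)},\frac{(1+\delta)\mu_2(t)}{1+\delta\mu_2(t)}\right)$. Then $\widehat V(t)=\frac{\mu_2(t)}{\mu_2(0)}\left(1-\frac12\frac{\delta}{1+\delta}\right)^t$ and, with $V^*(t)=\max_{\pi\in\Theta}V_\pi(t)$, $\lim_{t\to\infty}\frac1t\log\frac{\widehat V(t)}{V^*(t)}=\log\left(1-\frac12\frac\delta{1+\delta}\right)<0$.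
   Context: $\Delta_2=\{p\in(0,1)^2:p_1+p_2=1\}$, $\overline{\Delta}_2$ its closure. Relative value of a portfolio map $\pi:E\to\overline{\Delta}_2$: $V_\pi(0)=1$, $V_\pi(t+1)=V_\pi(t)\sum_{i=1}^2\pi_i(\mu(t))\mu_i(t+1)/\mu_i(t)$. $\widehat V(t)=\int_\Theta V_\pi(t)\,d\nu_0(\pi)$ is the relative value of Cover's portfolio $\widehat\pi(t)=\int\pi(\mu(t))\,d\nu_t(\pi)$, where $\nu_t(B)=\frac1{\widehat V(t)}\int_BV_\pi(t)\,d\nu_0(\pi)$. *)

From HB Require Import structures.
From mathcomp Require Import all_boot all_order all_algebra.
From mathcomp Require Import all_classical all_reals all_analysis.
Set Implicit Arguments. Unset Strict Implicit. Unset Printing Implicit Defensive.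
Import Order.TTheory GRing.Theory Num.Theory.
Import numFieldTopology.Exports numFieldNormedType.Exports.
Local Open Scope ring_scope.
Local Open Scope classical_set_scope.

(* E = { p in Delta_2 : p_1, p_2 rational }.  A point p = (p_1, 1 - p_1) of the
   open simplex with rational coordinates is encoded by its first coordinate
   p_1 in Q, 0 < p_1 < 1. *)
Definition E := {q : rat | (0 < q < 1)%R}.

(* A portfolio map pi : E -> closure(Delta_2) is encoded by its first coordinate
   f : E -> R, i.e. pi(p) = (f p, 1 - f p); it lies in the closed simplex iff
   0 <= f p <= 1 for all p.  The sigma-algebra on E -> R is the product
   sigma-algebra (generated by the coordinate maps). *)
Definition theta_gen (R : realType) : set (set (E -> R)) :=
  \bigcup_(p in [set: E]) preimage_set_system (@setT (E -> R)) (fun f : E -> R => f p) (@measurable _ R).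

Arguments theta_gen R : clear implicits.

Definition Theta (R : realType) := g_sigma_algebraType (theta_gen R).

Definition Theta_set (R : realType) : set (Theta R) :=
  [set f : Theta R | forall p : E, 0 <= f p <= 1].

Arguments Theta_set R : clear implicits.

(* nu0 = infinite product of the uniform distribution on closure(Delta_2):
   the coordinates pi_1(p), p in E, are i.i.d. uniform on [0,1]
   (equivalently pi(p) is uniform on the segment closure(Delta_2)).
   Stated through the finite-dimensional distributions, which determine the
   product measure on the product sigma-algebra. *)
Definition iid_uniform (R : realType) (nu0 : probability (Theta R) R) : Prop :=
  forall (s : seq E) (B : E -> set R), uniq s -> (forall p, measurable (B p)) ->
    nu0 [set f : Theta R | forall p, p \in s -> B p (f p)] =
    (\prod_(p <- s) uniform_prob (@ltr01 R) (B p))%E.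

Definition pi1 (R : realType) (f : E -> R) (q : rat) : R :=
  match (insub q : option E) with Some e => f e | None => 0 end.

Fixpoint mu (delta : rat) (t : nat) : rat * rat :=
  match t with
  | 0 => (1/2, 1/2)
  | t'.+1 => let m := mu delta t' in
      (m.1 / (1 + delta * m.2), (1 + delta) * m.2 / (1 + delta * m.2))
  end.

Fixpoint V (R : realType) (delta : rat) (f : E -> R) (t : nat) : R :=
  match t with
  | 0 => 1
  | t'.+1 => V delta f t' *
      (pi1 f (mu delta t').1 * ratr ((mu delta t).1 / (mu delta t').1)
       + (1 - pi1 f (mu delta t').1) * ratr ((mu delta t).2 / (mu delta t').2))
  end.

Definition Vhat (R : realType) (delta : rat) (nu0 : probability (Theta R) R) (t : nat)
  : \bar R := (\int[nu0]_(f in Theta_set R) (V delta f t)%:E)%E.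

Definition Vstar (R : realType) (delta : rat) (t : nat) : R :=
  sup [set V delta f t | f in Theta_set R].

Arguments Vstar R delta t : clear implicits.

(* With [b = delta / (1 + delta)], dividing the wealth of [pi] by the growth
   [mu_2(t) / mu_2(0)] of the market leaves [prod_(s < t) (1 - b pi_1(mu(s)))].
   The first weight of [mu] decreases strictly, so the points [mu(s)] are
   distinct and, under [nu0], the factors are independent with mean
   [1 - b/2]: this gives [Vhat].  Each factor is at most 1, with equality for
   [pi = (0, 1)], so [V*(t) = mu_2(t) / mu_2(0)] and [Vhat / V* = (1 - b/2)^t]. *)

From mathcomp Require Import all_boot all_order all_algebra.
From mathcomp Require Import all_classical all_reals all_analysis.
From mathcomp Require Import measurable_realfun.
From mathcomp Require Import ring lra.
Import Order.TTheory GRing.Theory Num.Theory.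
Import numFieldTopology.Exports numFieldNormedType.Exports.
Local Open Scope ring_scope.
Local Open Scope classical_set_scope.
Import HBNNSimple.

Section MarketWeights.
Variable delta : rat.
Hypothesis delta_gt0 : 0 < delta.

Lemma mu_simplex t :
  [/\ 0 < (mu delta t).1, 0 < (mu delta t).2 & (mu delta t).1 + (mu delta t).2 = 1].
Proof.
elim: t => [|t [m1 m2 m12]] /=; first by [].
have D_gt0 : 0 < 1 + delta * (mu delta t).2 by rewrite addr_gt0 // mulr_gt0.
split; [exact: divr_gt0 | by rewrite divr_gt0 // mulr_gt0 // addr_gt0 |].
have -> : (mu delta t).1 = 1 - (mu delta t).2 by rewrite -m12 addrK.
by field; rewrite lt0r_neq0.
Qed.

Lemma mu1_in01 t : 0 < (mu delta t).1 < 1.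
Proof. by have [m1 m2 <-] := mu_simplex t; rewrite m1 ltrDl. Qed.

Lemma mu1_decreasing k t : (k < t)%N -> (mu delta t).1 < (mu delta k).1.
Proof.
apply: (homo_ltn (f := fun t => (mu delta t).1) (r := fun x y => y < x)).
  by move=> y x z yx zy; exact: lt_trans zy yx.
move=> {k}t /=; have [m1 m2 _] := mu_simplex t.
by rewrite ltr_pdivrMr ?addr_gt0 ?mulr_gt0 // ltr_pMr // ltrDl mulr_gt0.
Qed.

(* The default point is never used, by [mu1_in01]. *)
Definition mu_point t : E := insubd (exist _ (1/2) erefl) (mu delta t).1.

Lemma val_mu_point t : val (mu_point t) = (mu delta t).1.
Proof. by rewrite /mu_point insubdK //; exact: mu1_in01. Qed.

Lemma pi1_mu (R : realType) (f : E -> R) t : pi1 f (mu delta t).1 = f (mu_point t).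
Proof.
rewrite /pi1; case: insubP => [e _ e_val|]; last by rewrite mu1_in01.
by congr f; apply: val_inj; rewrite e_val val_mu_point.
Qed.

Lemma mu_point_inj : injective mu_point.
Proof.
move=> k t /(congr1 val); rewrite !val_mu_point => e.
by case: (ltngtP k t) => // /mu1_decreasing; rewrite e ltxx.
Qed.

End MarketWeights.

Local Open Scope ereal_scope.

Section UniformGain.
Context {R : realType}.

Definition gain (b x : R) : R := 1 - b * x.

Definition gain01 (b x : R) : R := \1_(`[0%R, 1%R] : set R) x * gain b x.

Variable b : R.
Hypothesis b01 : (0 <= b <= 1)%R.

Lemma gain_ge0 x : (0 <= x <= 1)%R -> (0 <= gain b x)%R.
Proof. by case/andP: b01 => b0 b1 /andP[x0 x1]; rewrite subr_ge0 mulr_ile1. Qed.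

Lemma continuous_gain : continuous (gain b).
Proof.
move=> x; apply: cvgB; first exact: cvg_cst.
by apply: cvgM; [exact: cvg_cst | exact: cvg_id].
Qed.

(* The substitution [x -> 1 - x] shows that the integral equals its mean with
   the reflected integrand, and [gain b x + gain b (1 - x)] is constant. *)
Lemma integral_gain :
  \int[lebesgue_measure]_(x in `[0%R, 1%R]) (gain b x)%:E = (1 - b / 2)%:E.
Proof.
have gain_ge0_itv (x : R) : `[0%R, 1%R] x -> 0 <= (gain b x)%:E.
  by rewrite /= in_itv /= lee_fin => /gain_ge0.
have mgain : measurable_fun (`[0%R, 1%R] : set R) (fun x => (gain b x)%:E).
  apply/measurable_EFinP; apply: measurable_funTS.
  exact: continuous_measurable_fun continuous_gain.
set I := \int[lebesgue_measure]_(x in _) _.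
have I_reflect : I = \int[lebesgue_measure]_(x in `[0%R, 1%R]) (gain b (1 - x))%:E.
  rewrite /I integration_by_substitution_onem ?ler01 ?lexx //; last first.
    exact: continuous_subspaceT continuous_gain.
  by rewrite unstable.onem1.
have I_twice : I + I = (2 - b)%:E.
  rewrite {2}I_reflect /I -ge0_integralD //; last 2 first.
  - move=> x; rewrite /= in_itv /= => /andP[x0 x1].
    by rewrite lee_fin gain_ge0 // subr_ge0 x1 gerBl x0.
  - apply/measurable_EFinP; apply: measurable_funTS.
    apply: measurableT_comp (continuous_measurable_fun continuous_gain) _.
    exact: measurable_funB.
  rewrite (eq_integral (fun=> (2 - b)%:E)); last first.
    by move=> x _; rewrite -EFinD /gain; congr (_%:E); ring.
  have itv01 : lebesgue_measure (`[0%R, 1%R] : set R) = 1.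
    by rewrite lebesgue_measure_itv /= lte_fin ltr01 oppr0 adde0.
  by rewrite integral_cst // -[RHS]mule1; congr (_ * _).
have I_ge0 : 0 <= I by apply: integral_ge0.
move: I_twice I_ge0; case: (I) => [x| |] //.
by rewrite -EFinD => -[xx] _; congr (_%:E); lra.
Qed.

Lemma gain_le1 x : (0 <= x)%R -> (gain b x <= 1)%R.
Proof. by case/andP: b01 => b0 _ x0; rewrite /gain gerBl mulr_ge0. Qed.

Lemma gain01_ge0 x : (0 <= gain01 b x)%R.
Proof.
rewrite /gain01 indicE; case: (boolP (_ \in _)) => [|_]; last by rewrite mul0r.
by rewrite mul1r inE /= in_itv /=; exact: gain_ge0.
Qed.

Lemma measurable_gain01 : measurable_fun setT (gain01 b).
Proof.
apply: measurable_funM; first exact: measurable_indic.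
exact: continuous_measurable_fun continuous_gain.
Qed.

Lemma integral_uniform_gain01 :
  \int[uniform_prob (@ltr01 R)]_y (gain01 b y)%:E = (1 - b / 2)%:E.
Proof.
rewrite integral_uniform //; last 2 first.
- by apply/measurable_EFinP; exact: measurable_gain01.
- by move=> x; rewrite lee_fin gain01_ge0.
rewrite subr0 invr1 mul1e -integral_gain; apply: eq_integral => x.
by rewrite inE /gain01 indicE => x01; rewrite mem_set // mul1r.
Qed.

End UniformGain.

Section IntegralDensityPushforward.
Context d d' (T : measurableType d) (Y : measurableType d') (R : realType).
Variables (m : {measure set T -> \bar R}) (nu : {measure set Y -> \bar R}).
Variables (D : set T) (phi : T -> Y) (rho : T -> R) (c : \bar R).
Hypotheses (mD : measurable D) (mphi : measurable_fun D phi).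
Hypotheses (mrho : measurable_fun D rho) (rho_ge0 : forall x, D x -> (0 <= rho x)%R).
Hypothesis density_pushforward : forall A, measurable A ->
  \int[m]_(x in D `&` phi @^-1` A) (rho x)%:E = c * nu A.

Lemma integral_density_pushforward_nnsfun (g : {nnsfun Y >-> R}) :
  \int[m]_(x in D) ((g (phi x))%:E * (rho x)%:E) = c * \int[nu]_y (g y)%:E.
Proof.
rewrite integralT_nnsfun sintegralE ge0_mule_fsumr; last first.
  move=> y; have [y0|y0] := ltP y 0%R; last by rewrite mule_ge0.
  rewrite (_ : _ @^-1` _ = set0) ?measure0 ?mule0 //.
  apply/seteqP; split => x //= gx; have := @fun_ge0 _ _ g x.
  by move: gx => /= ->; rewrite leNgt y0.
under eq_integral => x _.
  rewrite fimfunE -fsumEFin // ge0_mule_fsuml; last first.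
    by move=> i; rewrite EFinM nnfun_muleindic_ge0.
  over.
rewrite ge0_integral_fsum //; last 2 first.
- move=> i; apply: emeasurable_funM; last exact/measurable_EFinP.
  apply/measurable_EFinP; apply: measurable_funM => //.
  exact: measurableT_comp (measurable_indic _) mphi.
- move=> i x Dx; rewrite EFinM mule_ge0 ?nnfun_muleindic_ge0 //.
  by rewrite lee_fin rho_ge0.
apply: eq_fsbigr => y /[!inE] -[x0 _ gx0].
have y0 : (0 <= y)%R by rewrite -gx0 (@fun_ge0 _ _ g).
under eq_integral do rewrite EFinM -muleA.
rewrite ge0_integralZl //.
- rewrite muleCA -(density_pushforward _ (measurable_sfunP g (measurable_set1 y))).
  rewrite integral_mkcondr; congr (_ * _); apply: eq_integral => x _.
  by rewrite epatch_indic /= muleC.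
- apply: emeasurable_funM; last exact/measurable_EFinP.
  apply/measurable_EFinP; exact: measurableT_comp (measurable_indic _) mphi.
- by move=> x Dx; rewrite mule_ge0 ?lee_fin ?rho_ge0.
Qed.

Hypothesis c_fin : c \is a fin_num.

(* Both sides are limits of the same sequence, by monotone convergence along
   the approximation of [h] by nonnegative simple functions. *)
Lemma integral_density_pushforward (h : Y -> \bar R) :
  measurable_fun setT h -> (forall y, 0 <= h y) ->
  \int[m]_(x in D) (h (phi x) * (rho x)%:E) = c * \int[nu]_y h y.
Proof.
move=> mh h_ge0; pose h_ := nnsfun_approx measurableT mh.
have h_nd y : {homo (fun n => h_ n y) : a b / (a <= b)%N >-> (a <= b)%R}.
  by move=> a b ab; exact/lefP/nd_nnsfun_approx.
have h_cvg y : (fun n => (h_ n y)%:E) @ \oo --> h y.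
  exact: (cvg_nnsfun_approx measurableT mh (fun y _ => h_ge0 y) (I : setT y)).
transitivity (limn (fun n => \int[m]_(x in D) ((h_ n (phi x))%:E * (rho x)%:E))).
  rewrite -monotone_convergence //=.
  - apply: eq_integral => x /[!inE] Dx; apply/esym/cvg_lim => //.
    exact: cvgeZr (h_cvg (phi x)).
  - move=> n; apply: emeasurable_funM; last exact/measurable_EFinP.
    apply/measurable_EFinP; apply: measurableT_comp mphi.
    exact: measurable_funTS.
  - by move=> n x Dx; rewrite mule_ge0 ?lee_fin ?rho_ge0.
  - by move=> x Dx a b ab; rewrite lee_wpmul2r ?lee_fin ?rho_ge0 ?h_nd.
rewrite [X in _ = c * X](_ : _ = limn (fun n => \int[nu]_y (h_ n y)%:E)); last first.
  rewrite -monotone_convergence //=.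
  - by apply: eq_integral => y _; apply/esym/cvg_lim => //; exact: h_cvg.
  - by move=> n; exact/measurable_EFinP.
  - by move=> n y _; rewrite lee_fin.
  - by move=> y _ a b ab; rewrite lee_fin h_nd.
rewrite -limeMl //.
  by congr (limn _); apply/funext => n; exact: integral_density_pushforward_nnsfun.
apply/ereal_nondecreasing_is_cvgn => a b ab; apply: ge0_le_integral => //=.
- by move=> ? _; rewrite lee_fin.
- exact/measurable_EFinP.
- exact/measurable_EFinP.
- by move=> y _; rewrite lee_fin h_nd.
Qed.

End IntegralDensityPushforward.

Section ThetaMeasurability.
Context {R : realType}.

Lemma measurable_coord (p : E) : measurable_fun setT (fun f : Theta R => f p).
Proof. by move=> _ Y mY; apply: sub_gen_smallest; exists p => //; exists Y. Qed.

Definition cylinder (s : seq E) (B : E -> set R) : set (Theta R) :=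
  [set f | forall p, p \in s -> B p (f p)].

Lemma cylinder_cons p s B :
  cylinder (p :: s) B = (fun f : Theta R => f p) @^-1` B p `&` cylinder s B.
Proof.
apply/seteqP; split => f /=.
  by move=> fB; split => [|q qs]; apply: fB; rewrite inE ?eqxx ?qs ?orbT.
by move=> [fp fs] q; rewrite inE => /orP[/eqP->//|]; exact: fs.
Qed.

Lemma eq_cylinder {s} {B1 B2} : {in s, B1 =1 B2} -> cylinder s B1 = cylinder s B2.
Proof.
move=> eqB; apply/seteqP; split => f fB p ps.
  by rewrite -eqB //; exact: fB.
by rewrite eqB //; exact: fB.
Qed.

Lemma measurable_cylinder s B : (forall p, measurable (B p)) -> measurable (cylinder s B).
Proof.
move=> mB; elim: s => [|p s IH].
  by rewrite (_ : cylinder _ _ = setT) //; apply/seteqP; split => f // _ q.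
rewrite cylinder_cons; apply: measurableI => //.
by rewrite -[X in measurable X]setTI; exact: measurable_coord.
Qed.

(* [E] is countable: enumerate the constraints [0 <= f p <= 1] through [pickle]. *)
Definition Theta_constraint (n : nat) : set (Theta R) :=
  if pickle_inv n is Some p then (fun f : Theta R => f p) @^-1` `[0%R, 1%R] else setT.

Lemma Theta_set_bigcap : Theta_set R = \bigcap_n Theta_constraint n.
Proof.
apply/seteqP; split => f /=.
  move=> f01 n _; rewrite /Theta_constraint.
  by case: (pickle_inv n) => [p|] //=; rewrite in_itv /= f01.
move=> f01 p; have := f01 (pickle p) I.
by rewrite /Theta_constraint pickleK_inv /= in_itv.
Qed.

Lemma measurable_Theta_constraint n : measurable (Theta_constraint n).
Proof.
rewrite /Theta_constraint; case: pickle_inv => // p.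
by rewrite -[X in measurable X]setTI; exact: measurable_coord.
Qed.

Lemma measurable_Theta_set : measurable (Theta_set R).
Proof.
rewrite Theta_set_bigcap; apply: bigcapT_measurable => n.
exact: measurable_Theta_constraint.
Qed.

End ThetaMeasurability.

Section IidUniformCoordinates.
Context {R : realType} {nu0 : probability (Theta R) R}.
Hypothesis iid : iid_uniform nu0.

Lemma uniform_prob_not01 : uniform_prob (@ltr01 R) (~` `[0%R, 1%R]) = 0.
Proof. by rewrite /uniform_prob integral_uniform_pdf setICl integral_set0. Qed.

Lemma negligible_not_Theta_set : nu0.-negligible (~` Theta_set R).
Proof.
rewrite Theta_set_bigcap setC_bigcap; apply: negligible_bigcup => n.
apply/negligibleP; first by apply: measurableC; exact: measurable_Theta_constraint.
rewrite /Theta_constraint; case: (pickle_inv n) => [p|]; last by rewrite setCT measure0.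
have -> : ~` ((fun f : Theta R => f p) @^-1` `[0%R, 1%R]) =
    cylinder [:: p] (fun=> ~` `[0%R, 1%R]).
  apply/seteqP; split => f /= fp; first by move=> q /[1!inE] /eqP->.
  by apply: fp; rewrite inE.
have not01 : measurable (~` (`[0%R, 1%R] : set R)) by apply: measurableC.
have := iid [:: p] (fun=> ~` `[0%R, 1%R]) isT (fun=> not01).
by rewrite big_seq1 uniform_prob_not01; apply.
Qed.

Lemma integral_Theta_set (h : Theta R -> \bar R) :
  measurable_fun setT h -> (forall f, 0 <= h f) ->
  \int[nu0]_(f in Theta_set R) h f = \int[nu0]_f h f.
Proof.
move=> mh h_ge0; rewrite integral_mkcond; apply: ge0_ae_eq_integral => //.
- apply/(measurable_restrictT _ (@measurable_Theta_set R)).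
  exact: measurable_funTS.
- by move=> f _; rewrite patchE; case: ifP.
- have [N [mN N0 notThetaN]] := negligible_not_Theta_set.
  exists N; split => // f /= hf; apply: notThetaN => Thetaf; apply: hf => _.
  by rewrite patchE mem_set.
Qed.

Context {pts : nat -> E} {h : R -> R} {a : R}.
Hypotheses (pts_inj : injective pts) (mh : measurable_fun setT h).
Hypotheses (h_ge0 : forall y, (0 <= h y)%R).
Hypothesis integral_h : \int[uniform_prob (@ltr01 R)]_y (h y)%:E = a%:E.

Let prod_h_ge0 t (f : Theta R) : (0 <= \prod_(k < t) h (f (pts k)))%R.
Proof. exact: prodr_ge0. Qed.

Let measurable_prod_h t :
  measurable_fun setT (fun f : Theta R => (\prod_(k < t) h (f (pts k)))%R).
Proof.
apply: measurable_prod => k _.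
exact: measurableT_comp mh (measurable_coord (pts k)).
Qed.

(* Generalising to cylinders makes the induction go through: the last factor
   is integrated out by [integral_density_pushforward], whose hypothesis is
   [iid_uniform] on the cylinder extended by [pts t]. *)
Lemma integral_cylinder_prod t s B : (forall p, measurable (B p)) -> uniq s ->
  (forall k, (k < t)%N -> pts k \notin s) ->
  \int[nu0]_(f in cylinder s B) (\prod_(k < t) h (f (pts k)))%R%:E =
    nu0 (cylinder s B) * (a ^+ t)%:E.
Proof.
have a_ge0 : (0 <= a)%R by rewrite -lee_fin -integral_h integral_ge0 // => y _; rewrite lee_fin.
elim: t s B => [|t IH] s B mB s_uniq s_pts.
  rewrite expr0 mule1 (eq_integral (cst 1)) ?integral_cst ?mul1e //.
    exact: measurable_cylinder.
  by move=> f _; rewrite big_ord0.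
have pt_s : pts t \notin s by apply: s_pts.
under eq_integral do rewrite big_ord_recr /= EFinM muleC.
rewrite (@integral_density_pushforward _ _ _ _ _ nu0 (uniform_prob (@ltr01 R))
   (cylinder s B) (fun f : Theta R => f (pts t)) (fun f => \prod_(k < t) h (f (pts k)))%R
   (nu0 (cylinder s B) * (a ^+ t)%:E) _ _ _ _ _ _ (fun y => (h y)%:E)) //.
- by rewrite integral_h -muleA -EFinM exprSr.
- exact: measurable_cylinder.
- exact: measurable_funTS (measurable_coord (pts t)).
- exact: measurable_funTS.
- move=> A mA; pose B' p := if p == pts t then A else B p.
  have mB' p : measurable (B' p).
    by rewrite /B'; case: ifP => _; [exact: mA | exact: mB].
  have B'_s : {in s, B' =1 B}.
    by move=> p ps; rewrite /B'; case: eqP => // pt; rewrite -pt ps in pt_s.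
  have B'_t : B' (pts t) = A by rewrite /B' eqxx.
  have -> : cylinder s B `&` (fun f : Theta R => f (pts t)) @^-1` A = cylinder (pts t :: s) B'.
    by rewrite cylinder_cons B'_t (eq_cylinder B'_s) setIC.
  rewrite IH //=; last 2 first.
  + by rewrite pt_s.
  + move=> k kt; rewrite inE negb_or s_pts ?(ltn_trans kt) // andbT.
    by apply/eqP => /pts_inj kt'; rewrite kt' ltnn in kt.
  rewrite (iid (pts t :: s) B') ?(iid s B) //= ?pt_s //.
  rewrite big_cons B'_t; under eq_big_seq => p ps do rewrite B'_s //.
  by rewrite [RHS]muleC muleA.
- by rewrite fin_numM // fin_num_measure //; exact: measurable_cylinder.
- exact/measurable_EFinP.
Qed.

Lemma integral_Theta_set_prod t :
  \int[nu0]_(f in Theta_set R) (\prod_(k < t) h (f (pts k)))%R%:E = (a ^+ t)%:E.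
Proof.
rewrite integral_Theta_set //; last 2 first.
- exact/measurable_EFinP.
- by move=> f; rewrite lee_fin.
have := @integral_cylinder_prod t [::] (fun=> setT) (fun=> measurableT) isT (fun _ _ => isT).
rewrite (_ : cylinder _ _ = setT); last by apply/seteqP; split => f // _ p.
by rewrite probability_setT mul1e.
Qed.

End IidUniformCoordinates.

Lemma sup_maximum (R : realType) (S : set R) x : S x -> ubound S x -> sup S = x.
Proof.
move=> Sx ubx; apply/le_anti/andP; split; first by apply: ge_sup => //; exists x.
by apply: ub_le_sup => //; exists x.
Qed.

Section CoverPortfolio.
Variables (R : realType) (delta : rat).
Hypothesis delta_gt0 : (0 < delta)%R.

Let b : R := ratr delta / (1 + ratr delta).

Let b01 : (0 <= b <= 1)%R.
Proof.
have d0 : (0 < ratr delta :> R)%R by rewrite ltr0q.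
apply/andP; split; first by rewrite divr_ge0 // ltW // addr_gt0.
by rewrite ler_pdivrMr ?addr_gt0 // mul1r; lra.
Qed.

Let M t : R := ratr ((mu delta t).2 / (mu delta 0).2).

Let M_gt0 t : (0 < M t)%R.
Proof. by have [_ m2 _] := mu_simplex _ delta_gt0 t; rewrite ltr0q divr_gt0. Qed.

(* Relative to the growth [(1 + delta) / (1 + delta mu_2(t))] of [mu_2], the
   return of [pi] at time [t] is [gain b (pi_1 (mu t))]. *)
Lemma V_prod (f : E -> R) t :
  V delta f t = (M t * \prod_(k < t) gain b (f (mu_point delta k)))%R.
Proof.
elim: t => [|t IH] /=; first by rewrite big_ord0 /M divff // rmorph1 mulr1.
have [m1 m2 _] := mu_simplex _ delta_gt0 t.
set D := (1 + delta * (mu delta t).2)%R.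
have D_gt0 : (0 < D)%R by rewrite addr_gt0 // mulr_gt0.
have -> : ((mu delta t).1 / D / (mu delta t).1 = D^-1)%R.
  by field; rewrite !lt0r_neq0.
have -> : ((1 + delta) * (mu delta t).2 / D / (mu delta t).2 = (1 + delta) / D)%R.
  by field; rewrite !lt0r_neq0.
rewrite pi1_mu // IH big_ord_recr /= /M /b /gain.
have -> : ((1 + delta) * (mu delta t).2 / D / (mu delta 0).2
    = (mu delta t).2 / (mu delta 0).2 * ((1 + delta) / D))%R by ring.
rewrite !(rmorphM, rmorphD, fmorphV, rmorph1) /=.
have d0 : (1 + ratr delta : R)%R != 0%R by rewrite lt0r_neq0 // addr_gt0 // ltr0q.
have : (ratr D : R) != 0%R by rewrite fmorph_eq0 lt0r_neq0.
by rewrite /D !(rmorphM, rmorphD, rmorph1) => D0; field; rewrite D0 d0.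
Qed.

Lemma V_Theta_set (f : E -> R) t : Theta_set R f ->
  V delta f t = (M t * \prod_(k < t) gain01 b (f (mu_point delta k)))%R.
Proof.
move=> f01; rewrite V_prod //; congr (_ * _)%R; apply: eq_bigr => k _.
by rewrite /gain01 indicE mem_set ?mul1r //= in_itv /= f01.
Qed.

Lemma Vhat_eq (nu0 : probability (Theta R) R) t : iid_uniform nu0 ->
  Vhat delta nu0 t = (M t * (1 - b / 2) ^+ t)%:E.
Proof.
move=> iid; rewrite /Vhat.
under eq_integral => f /[!inE] f01 do rewrite V_Theta_set // EFinM.
rewrite ge0_integralZl ?lee_fin ?ltW //; last 3 first.
- exact: measurable_Theta_set.
- apply/measurable_EFinP; apply: measurable_funTS; apply: measurable_prod => k _.
  exact: measurableT_comp (measurable_gain01 b) (measurable_coord _).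
- by move=> f _; rewrite lee_fin prodr_ge0 // => k _; exact: gain01_ge0.
by rewrite (integral_Theta_set_prod iid (mu_point_inj _ delta_gt0) (measurable_gain01 b)
  (gain01_ge0 _ b01) (integral_uniform_gain01 _ b01)) EFinM.
Qed.

Lemma Vstar_eq t : Vstar R delta t = M t.
Proof.
apply: sup_maximum.
  exists (fun=> 0%R) => [p|]; first by rewrite lexx ler01.
  by rewrite V_prod // /gain mulr0 subr0 big1 ?mulr1.
move=> _ [f f01 <-]; rewrite V_prod //; apply: ler_piMr; first exact: ltW.
apply: prodr_ile1 => k _; have /andP[x0 x1] := f01 (mu_point delta k).
by rewrite gain_ge0 ?x0 // gain_le1.
Qed.

Lemma Vhat_Vstar (nu0 : probability (Theta R) R) t : iid_uniform nu0 ->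
  (fine (Vhat delta nu0 t) / Vstar R delta t = (1 - b / 2) ^+ t)%R.
Proof. by move=> iid; rewrite Vhat_eq // Vstar_eq /= mulrAC divff ?mul1r // lt0r_neq0. Qed.

End CoverPortfolio.

Local Close Scope ereal_scope.

Theorem proposition3p7 (R : realType) (delta : rat) (nu0 : probability (Theta R) R) :
  0 < delta -> iid_uniform nu0 ->
  let c : R := 1 - 2^-1 * (ratr delta / (1 + ratr delta)) in
  (forall t : nat,
     Vhat delta nu0 t = (ratr ((mu delta t).2 / (mu delta 0).2) * c ^+ t)%:E) /\
  ((fun t : nat => t%:R^-1 * ln (fine (Vhat delta nu0 t) / Vstar R delta t))
     @ \oo --> ln c) /\
  ln c < 0.
Proof.
move=> delta_gt0 iid c.
have cE : c = 1 - ratr delta / (1 + ratr delta) / 2 by rewrite /c mulrC.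
have c01 : 0 < c < 1.
  have d0 : 0 < ratr delta :> R by rewrite ltr0q.
  have b_gt0 : 0 < ratr delta / (1 + ratr delta) :> R by rewrite divr_gt0 // addr_gt0.
  have b_lt1 : ratr delta / (1 + ratr delta) < 1 :> R.
    by rewrite ltr_pdivrMr ?addr_gt0 //; lra.
  rewrite /c; lra.
split; first by move=> t; rewrite cE Vhat_eq.
split; last by apply: ln_lt0.
apply: cvg_near_cst; near=> t.
rewrite cE Vhat_Vstar // -cE lnXn ?(andP c01).1 //.
rewrite -[ln c *+ t]mulr_natr mulrC mulfK //.
by rewrite pnatr_eq0 -lt0n; near: t; exists 1%N.
Unshelve. all: by end_near.
Qed.
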